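(* Let $M$ be a finite $\mathscr R$-trivial monoid, $k$ a field and $X\in\Lambda(M)$. Let $S_X$ be the simple $kM$-module associated to $X$ and $P_X$ its projective cover. Then $P_X\cong kML_X/k\widetilde L(X)_<$. More precisely, $P_X$ is isomorphic to the $kM$-module $k\widetilde L_X$ with basis $\widetilde L_X$ and action given on basis elements by $m\cdot n=mn$ if $mn\in\widetilde L_X$ and $m\cdot n=0$ otherwise ($m\in M$, $n\in\widetilde L_X$).
   Context: $M$ is $\mathscr R$-trivial if $mM=nM$ implies $m=n$. $\Lambda(M)$ is the set of ideals $MeM$ with $e$ idempotent; $\sigma(m)=Mm^\omega M$ ($m^\omega$ the idempotent power). $S_X$ is the one-dimensional module on which $m$ acts by $1$ if $X\subseteq \sigma(m)$ and $0$ otherwise. Fix an idempotent $e_X$ with $Me_XM=X$; $L_X=\{n\in M: Mn=Me_X\}$. Define $m\le_{\widetilde{\mathscr L}}n$ if for every idempotent $e$, $ne=n$ implies $me=m$; $m\mathrel{\widetilde{\mathscr L}}n$ if both $m\le n$ and $n\le m$. $\widetilde L_X$ is the $\widetilde{\mathscr L}$-class of $e_X$, $ML_X=\{mn: m\in M,n\in L_X\}$, $\widetilde L(X)_<=ML_X\setminus\widetilde L_X$ (both left ideals), and $kML_X/k\widetilde L(X)_<$ is the quotient of the spans. *)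

From HB Require Import structures.
From mathcomp Require Import all_boot all_order all_algebra.
Set Implicit Arguments. Unset Strict Implicit. Unset Printing Implicit Defensive.
Import GRing.Theory.
Local Open Scope ring_scope.

Record finMonoid := FinMonoid {
  mcar :> finType;
  mmul : mcar -> mcar -> mcar;
  mone : mcar;
  mmulA : associative mmul;
  mmul1 : left_id mone mmul;
  mmulm1 : right_id mone mmul }.

Section MonoidDefs.
Variable M : finMonoid.
Local Notation "x ** y" := (mmul x y) (at level 40, left associativity).

Definition idempotent_el (e : M) : bool := e ** e == e.

Fixpoint mpow (m : M) (k : nat) : M :=
  if k is k'.+1 then m ** mpow m k' else mone M.

Definition momega (m : M) : M :=
  odflt m [pick e | idempotent_el e &&
     [exists k : 'I_(#|M|.+1), (0 < (k : nat))%N && (e == mpow m k)]].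

Definition right_ideal_of (m : M) : {set M} := [set m ** a | a : M].
Definition left_ideal_of (m : M) : {set M} := [set a ** m | a : M].
Definition R_trivial : Prop :=
  forall m n : M, right_ideal_of m = right_ideal_of n -> m = n.

Definition two_sided_ideal (m : M) : {set M} := [set a ** m ** b | a : M, b : M].

Definition Lambda (X : {set M}) : Prop :=
  exists e : M, idempotent_el e /\ two_sided_ideal e = X.

Definition sigma (m : M) : {set M} := two_sided_ideal (momega m).

(* L_X, for a fixed idempotent eX with M eX M = X *)
Definition L_of (eX : M) : {set M} := [set n | left_ideal_of n == left_ideal_of eX].

Definition leLt (m n : M) : bool :=
  [forall e : M, idempotent_el e ==> ((n ** e == n) ==> (m ** e == m))].
Definition eqLt (m n : M) : bool := leLt m n && leLt n m.

Definition Lt_of (eX : M) : {set M} := [set n | eqLt n eX].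
Definition ML_of (eX : M) : {set M} := [set a ** n | a : M, n : M in L_of eX].
Definition Llt_of (eX : M) : {set M} := ML_of eX :\: Lt_of eX.

End MonoidDefs.

Notation LtT eX := {n : _ | n \in Lt_of eX}.
Notation kLt k eX := {ffun LtT eX -> k^o}.
Notation MLT eX := {n : _ | n \in ML_of eX}.
Notation kML k eX := {ffun MLT eX -> k^o}.

Section ModuleDefs.
Variables (k : fieldType) (M : finMonoid).

Definition lin_map (V W : lmodType k) (f : V -> W) : Prop :=
  forall (a : k) (u v : V), f (a *: u + v) = a *: f u + f v.

Definition is_kM_module (V : lmodType k) (act : M -> V -> V) : Prop :=
  [/\ forall m, lin_map (act m),
      forall v, act (mone M) v = v &
      forall m n v, act (mmul m n) v = act m (act n v)].

Definition is_kM_hom (V W : lmodType k) (actV : M -> V -> V) (actW : M -> W -> W)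
  (f : V -> W) : Prop :=
  lin_map f /\ forall m v, f (actV m v) = actW m (f v).

Definition is_projective (P : lmodType k) (actP : M -> P -> P) : Prop :=
  is_kM_module actP /\
  forall (A B : lmodType k) (actA : M -> A -> A) (actB : M -> B -> B) (g : A -> B),
    is_kM_module actA -> is_kM_module actB -> is_kM_hom actA actB g ->
    (forall b, exists a, g a = b) ->
    forall h : P -> B, is_kM_hom actP actB h ->
    exists h' : P -> A, is_kM_hom actP actA h' /\ forall v, g (h' v) = h v.

Definition is_submodule (P : lmodType k) (actP : M -> P -> P) (N : P -> Prop) : Prop :=
  [/\ N 0, forall u v, N u -> N v -> N (u + v),
      forall (a : k) v, N v -> N (a *: v) &
      forall m v, N v -> N (actP m v)].

(* (P, pi) is a projective cover of S: P projective, pi : P ->> S an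
   epimorphism whose kernel is superfluous. *)
Definition is_projective_cover (S : lmodType k) (actS : M -> S -> S)
  (P : lmodType k) (actP : M -> P -> P) (pi : P -> S) : Prop :=
  [/\ is_projective actP, is_kM_hom actP actS pi,
      (forall s, exists v, pi v = s) &
      forall N : P -> Prop, is_submodule actP N ->
        (forall v, exists a b, [/\ N a, pi b = 0 & v = a + b]) ->
        forall v, N v].

Definition kM_isomorphic (V W : lmodType k) (actV : M -> V -> V) (actW : M -> W -> W)
  : Prop :=
  exists f : V -> W, is_kM_hom actV actW f /\ bijective f.

Definition S_act (X : {set M}) (m : M) (x : k^o) : k^o :=
  if X \subset sigma m then x else 0.

Definition basisLt (eX : M) (n : LtT eX) : kLt k eX := [ffun x => (x == n)%:R].
Definition Lt_img (eX : M) (m : M) (n : LtT eX) : kLt k eX :=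
  if (insub (mmul m (val n)) : option (LtT eX)) is Some n'
  then basisLt n' else 0.
Definition Lt_act (eX : M) (m : M) (f : kLt k eX) : kLt k eX :=
  \sum_(n : LtT eX) f n *: Lt_img m n.

Definition basisML (eX : M) (n : MLT eX) : kML k eX := [ffun x => (x == n)%:R].
Definition ML_img (eX : M) (m : M) (n : MLT eX) : kML k eX :=
  if (insub (mmul m (val n)) : option (MLT eX)) is Some n'
  then basisML n' else 0.
Definition ML_act (eX : M) (m : M) (f : kML k eX) : kML k eX :=
  \sum_(n : MLT eX) f n *: ML_img m n.

Definition in_kLlt (eX : M) (f : kML k eX) : Prop :=
  forall n : MLT eX, val n \notin Llt_of eX -> f n = 0.

End ModuleDefs.

From mathcomp Require Import all_boot all_order all_algebra zify.
Set Implicit Arguments. Unset Strict Implicit. Unset Printing Implicit Defensive.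
Import GRing.Theory.
Local Open Scope ring_scope.

(* The module [k L~_X] is generated by [eX], and a module map out of it is the
   same as a vector fixed by [eX] and annihilated by every [z] that lies in
   [M eX] strictly below [eX] for the L~-preorder.  By R-triviality every such
   [z] has an idempotent right unit [g] of the same kind, and [z g != z] forces
   [#|z g M| < #|z M|]; so iterating [b |-> b - g b] over these idempotents turns
   any preimage of the generator into such a vector, which gives projectivity.
   For the superfluous kernel, a submodule covering [S_X] contains a vector [u]
   with [u eX = 1] supported on [eX M]; acting on [u] by [y] isolates the basis
   vector [y] up to terms [y x] with strictly smaller right ideals, so an
   induction on [#|y M|] puts every basis vector in the submodule.  Uniqueness
   of projective covers is the usual argument, and restriction of functions from
   [M L_X] to [L~_X] realizes the quotient [k M L_X / k L~(X)_<]. *)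


Section RTrivialMonoid.
Variable M : finMonoid.
Local Notation "x ** y" := (mmul x y) (at level 40, left associativity).

Lemma mem_right_ideal (x y : M) : x ** y \in right_ideal_of x.
Proof. by apply/imsetP; exists y. Qed.

Lemma right_idealM_sub (x y : M) : right_ideal_of (x ** y) \subset right_ideal_of x.
Proof. by apply/subsetP=> _ /imsetP[a _ ->]; rewrite -mmulA mem_right_ideal. Qed.

Lemma card_right_idealM (x y : M) :
  (#|right_ideal_of (x ** y)| <= #|right_ideal_of x|)%N.
Proof. exact/subset_leq_card/right_idealM_sub. Qed.

Lemma card_right_ideal_gt0 (x : M) : (0 < #|right_ideal_of x|)%N.
Proof. by apply/card_gt0P; exists x; rewrite -{1}(mmulm1 x) mem_right_ideal. Qed.

Lemma mpowSr (m : M) k : mpow m k.+1 = mpow m k ** m.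
Proof.
elim: k => [|k IH] /=; first by rewrite mmul1 mmulm1.
by rewrite -mmulA -IH.
Qed.

Lemma mpowD (m : M) i j : mpow m (i + j) = mpow m i ** mpow m j.
Proof. by elim: i => [|i IH] /=; rewrite ?mmul1 // IH mmulA. Qed.

Lemma mpow_absorb (m x : M) j : x ** m = x -> x ** mpow m j = x.
Proof. by move=> xm; elim: j => [|j IH] /=; rewrite ?mmulm1 // mmulA xm. Qed.

Lemma leLtP (x y : M) :
  reflect (forall e, e ** e = e -> y ** e = y -> x ** e = x) (leLt x y).
Proof.
apply: (iffP forallP) => [H e ee ye | H e].
  by have /implyP/(_ (introT eqP ee))/implyP/(_ (introT eqP ye))/eqP := H e.
by apply/implyP=> /eqP ee; apply/implyP=> /eqP ye; rewrite H.
Qed.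

Lemma leLt_trans (x y z : M) : leLt x y -> leLt y z -> leLt x z.
Proof. by move=> /leLtP xy /leLtP yz; apply/leLtP=> e ee /yz-/(_ ee)/xy; apply. Qed.

Lemma leLt_mull (m x : M) : leLt (m ** x) x.
Proof. by apply/leLtP=> e _ xe; rewrite -mmulA xe. Qed.

Hypothesis RT : R_trivial M.

Lemma card_right_idealM_lt (x y : M) : x ** y != x ->
  (#|right_ideal_of (x ** y)| < #|right_ideal_of x|)%N.
Proof.
apply: contraNT; rewrite -leqNgt => le; apply/eqP/RT/eqP.
by rewrite eqEcard right_idealM_sub.
Qed.

(* In an R-trivial monoid [x] and [x y] generate the same right ideal as soon
   as [x] lies in [x y M]. *)
Lemma R_trivial_prefix (x y z : M) : x ** y ** z = x -> x ** y = x.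
Proof.
move=> xyz; apply/RT/eqP; rewrite eqEsubset right_idealM_sub /=.
by apply/subsetP=> _ /imsetP[a _ ->]; rewrite -{1}xyz -mmulA mem_right_ideal.
Qed.

Lemma idempotent_factor (e x y : M) : e ** e = e -> e = x ** y -> e ** x = e.
Proof. by move=> ee exy; apply: (@R_trivial_prefix _ _ y); rewrite -mmulA -exy. Qed.

(* Pigeonhole gives [m^(i+1) = m^(j+1)] with [i < j]; R-triviality then
   forces [m^(i+1) m = m^(i+1)]. *)
Lemma exists_idempotent_mpow (m : M) : exists2 k, (0 < k <= #|M|)%N &
  mpow m k ** mpow m k = mpow m k.
Proof.
have /injectivePn[i [j ne_ij eq_ij]] : ~~ injectiveb (fun i : 'I_#|M|.+1 => mpow m i.+1).
  by apply/injectiveP=> /leq_card; rewrite card_ord ltnn.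
wlog lt_ij : i j ne_ij eq_ij / (i < j)%N.
  move=> W; case: (ltngtP i j) => [|lt_ji|/val_inj eq]; first exact: W.
  - by apply: (W j i); rewrite 1?eq_sym.
  - by rewrite eq eqxx in ne_ij.
exists i.+1; first by have := ltn_ord i; have := ltn_ord j; lia.
apply: mpow_absorb; apply: (@R_trivial_prefix _ _ (mpow m (j - i).-1)).
rewrite -mpowSr -mpowD (_ : (i.+2 + (j - i).-1 = j.+1)%N) //; lia.
Qed.

Lemma momega_spec (m : M) : momega m ** momega m = momega m /\
  exists2 k, (0 < k)%N & momega m = mpow m k.
Proof.
rewrite /momega; case: pickP => [e /andP[/eqP ee /existsP[k /andP[k_gt0 /eqP ek]]]|none] /=.
  by split=> //; exists (nat_of_ord k); rewrite -?ek.
have [k /andP[k_gt0 k_le] kk] := exists_idempotent_mpow m.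
have /negP[] := none (mpow m k); rewrite /idempotent_el kk eqxx /=.
by apply/existsP; exists (Ordinal (k_le : (k < #|M|.+1)%N)); rewrite k_gt0 /=.
Qed.

Lemma momega_idem (m : M) : momega m ** momega m = momega m.
Proof. by case: (momega_spec m). Qed.

Lemma momega_mpowS (m : M) : exists k, momega m = mpow m k.+1.
Proof. by case: (momega_spec m) => _ [[|k] // _ ->]; exists k. Qed.

Lemma momega_mulr (m : M) : momega m ** m = momega m.
Proof.
have [k e] := momega_mpowS m; have ee := momega_idem m.
by rewrite e in ee *; apply: idempotent_factor ee _.
Qed.

Lemma mulr_momega (x m : M) : x ** m = x -> x ** momega m = x.
Proof. by move=> xm; have [k ->] := momega_mpowS m; apply: mpow_absorb. Qed.

Lemma momega_mem_right_ideal (m : M) : momega m \in right_ideal_of m.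
Proof. by have [k ->] := momega_mpowS m; apply: mem_right_ideal. Qed.

Lemma momega_fix (m x : M) : m ** x = m -> momega m ** x = momega m.
Proof. by move=> mx; have [k ->] := momega_mpowS m; rewrite mpowSr -mmulA mx. Qed.

Lemma two_sided_ideal_sub_sigma (e m : M) : e ** e = e ->
  (two_sided_ideal e \subset sigma m) = (e ** m == e).
Proof.
move=> ee; apply/idP/eqP => [/subsetP sub | em].
  have /sub/imset2P[a b _ _ e_awb] : e \in two_sided_ideal e.
    by apply/imset2P; exists (mone M) (mone M); rewrite ?mmul1 ?mmulm1.
  have e_w : e ** momega m = e.
    have e_aw : e ** (a ** momega m) = e by apply: (idempotent_factor (y := b)).
    by rewrite -{1}e_aw -!mmulA momega_idem.
  by rewrite -e_w -mmulA momega_mulr.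
apply/subsetP=> _ /imset2P[a b _ _ ->]; apply/imset2P; exists (a ** e) b => //.
by rewrite -(mmulA a e (momega m)) (mulr_momega em).
Qed.

Section LtClass.
Variable eX : M.
Hypothesis eXi : eX ** eX = eX.
Local Notation Lt := (Lt_of eX).

Lemma leLt_idem (x : M) : (leLt x eX) = (x ** eX == x).
Proof.
apply/leLtP/eqP => [le_x_eX | xe e _ eXe]; first exact: le_x_eX eX eXi eXi.
by rewrite -xe -mmulA eXe.
Qed.

Lemma mem_LtE (x : M) : (x \in Lt) = (x ** eX == x) && leLt eX x.
Proof. by rewrite inE /eqLt leLt_idem. Qed.

Lemma Lt_mulr_eX (x : M) : x \in Lt -> x ** eX = x.
Proof. by rewrite mem_LtE => /andP[/eqP]. Qed.

Lemma eX_mem_Lt : eX \in Lt.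
Proof. by rewrite mem_LtE eXi eqxx; apply/leLtP. Qed.

Lemma Lt_fix_eX (x e : M) : x \in Lt -> e ** e = e -> x ** e = x -> eX ** e = eX.
Proof. by rewrite mem_LtE => /andP[_ /leLtP]; apply. Qed.

Lemma mem_Lt_mull (m x : M) : x ** eX = x -> m ** x \in Lt -> x \in Lt.
Proof.
move=> xe; rewrite !mem_LtE xe eqxx => /andP[_ le_eX_mx].
exact: leLt_trans le_eX_mx (leLt_mull _ _).
Qed.

Definition strictly_below (x : M) := (x ** eX == x) && (x \notin Lt).
Definition strict_idems := [seq g <- enum M | (g ** g == g) && strictly_below g].

Lemma strictly_below_mull (m x : M) : strictly_below x -> strictly_below (m ** x).
Proof.
case/andP=> /eqP xe xLt; rewrite /strictly_below -mmulA xe eqxx /=.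
by apply: contra xLt; apply: mem_Lt_mull.
Qed.

Lemma mem_strict_idems (g : M) :
  (g \in strict_idems) = (g ** g == g) && strictly_below g.
Proof. by rewrite mem_filter mem_enum andbT. Qed.

Lemma strictly_below_right_unit (z : M) :
  strictly_below z -> exists2 g, g \in strict_idems & z ** g = z.
Proof.
rewrite /strictly_below mem_LtE => /andP[/eqP ze]; rewrite ze eqxx /=.
case/forallPn=> e; rewrite !negb_imply => /and3P[/eqP ee /eqP ze' eXe].
pose g := momega (e ** eX); have gg : g ** g = g := momega_idem _.
have zg : z ** g = z by apply: mulr_momega; rewrite mmulA ze' ze.
exists g => //; rewrite mem_strict_idems gg eqxx /strictly_below.
rewrite momega_fix -?mmulA ?eXi // eqxx /=; apply: contra eXe => gLt.
have [a _ g_eXa] := imsetP (momega_mem_right_ideal (e ** eX)).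
have eX_g : eX ** g = eX := Lt_fix_eX gLt gg gg.
have : eX = eX ** e ** (eX ** a) by rewrite -mmulA (mmulA e) -g_eXa eX_g.
by move/(idempotent_factor eXi); rewrite mmulA eXi => ->.
Qed.

Lemma eX_fix_prefix (m n : M) : eX ** (m ** n) = eX -> eX ** m = eX.
Proof.
move=> e_mn; have := @idempotent_factor _ (eX ** m) n eXi.
by rewrite -mmulA e_mn mmulA eXi; apply.
Qed.

Lemma Lt_mull_fix (m n : M) : n \in Lt ->
  (m ** n \in Lt) && (eX ** (m ** n) == eX) = (eX ** m == eX) && (eX ** n == eX).
Proof.
move=> nLt; apply/andP/andP => [[_ /eqP e_mn] | [/eqP em /eqP en]].
  have em := eX_fix_prefix e_mn; split; apply/eqP => //.
  by rewrite -{2}e_mn mmulA em.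
have e_mn : eX ** (m ** n) = eX by rewrite mmulA em en.
rewrite mem_LtE -mmulA (Lt_mulr_eX nLt) e_mn !eqxx; split=> //.
by apply/leLtP=> e _ mne; rewrite -e_mn -mmulA mne.
Qed.

Lemma Lt_mulr_neq (y x : M) : y \in Lt -> eX ** x = x -> x != eX -> y ** x != y.
Proof.
move=> yLt ex; apply: contra_neq => yx.
have eX_w : eX ** momega x = eX.
  by apply: Lt_fix_eX yLt (momega_idem x) _; apply: mulr_momega.
have [c _ wc] := imsetP (momega_mem_right_ideal x).
have eX_xc : eX = x ** c by rewrite -{1}eX_w wc mmulA ex.
apply/RT/eqP; rewrite eqEsubset -{1}ex right_idealM_sub /= eX_xc.
by apply/subsetP=> _ /imsetP[d _ ->]; rewrite -mmulA mem_right_ideal.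
Qed.

End LtClass.
End RTrivialMonoid.

Section LinMap.
Variables (k : fieldType) (V W : lmodType k) (F : V -> W).
Hypothesis linF : lin_map F.

Lemma lin0 : F 0 = 0.
Proof.
have := linF 1 0 0; rewrite scaler0 addr0 scale1r => F0.
by apply: (addrI (F 0)); rewrite -F0 addr0.
Qed.

Lemma linD u v : F (u + v) = F u + F v.
Proof. by have := linF 1 u v; rewrite !scale1r. Qed.

Lemma linZ a u : F (a *: u) = a *: F u.
Proof. by have := linF a u 0; rewrite !addr0 lin0 addr0. Qed.

Lemma linB u v : F (u - v) = F u - F v.
Proof. by rewrite linD -scaleN1r linZ scaleN1r. Qed.

Lemma lin_sum (I : Type) (r : seq I) (P : pred I) (G : I -> V) :
  F (\sum_(i <- r | P i) G i) = \sum_(i <- r | P i) F (G i).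
Proof. exact: (big_morph F linD lin0). Qed.

End LinMap.

Lemma lin_comp (k : fieldType) (U V W : lmodType k) (F : V -> W) (G : U -> V) :
  lin_map F -> lin_map G -> lin_map (F \o G).
Proof. by move=> linF linG a u v; rewrite /= linG linF. Qed.

Section ModuleLaws.
Variables (k : fieldType) (M : finMonoid) (V : lmodType k) (act : M -> V -> V).
Hypothesis modV : is_kM_module act.

Lemma kM_module_lin m : lin_map (act m). Proof. by case: modV. Qed.
Lemma kM_module_actM m n v : act (mmul m n) v = act m (act n v). Proof. by case: modV. Qed.

End ModuleLaws.

Lemma kM_hom_comp (k : fieldType) (M : finMonoid) (U V W : lmodType k)
    (actU : M -> U -> U) (actV : M -> V -> V) (actW : M -> W -> W)
    (f : V -> W) (g : U -> V) :
  is_kM_hom actV actW f -> is_kM_hom actU actV g -> is_kM_hom actU actW (f \o g).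
Proof.
case=> linf homf [ling homg]; split=> [|m u]; first exact: lin_comp.
by rewrite /= homg homf.
Qed.

Section FreeModule.
Variables (k : fieldType) (M : finMonoid) (A : {set M}).
Local Notation "x ** y" := (mmul x y) (at level 40, left associativity).
Local Notation T := {n : M | n \in A}.
Local Notation V := {ffun T -> k^o}.

Definition free_basis (n : T) : V := [ffun x => (x == n)%:R].
Definition free_img (m : M) (n : T) : V :=
  if (insub (m ** val n) : option T) is Some n' then free_basis n' else 0.
Definition free_act (m : M) (f : V) : V := \sum_(n : T) f n *: free_img m n.

Lemma free_expand (f : V) : f = \sum_n f n *: free_basis n.
Proof.
apply/ffunP=> x; rewrite sum_ffunE (bigD1 x) //= big1 => [|y yx].
  by rewrite !ffunE eqxx addr0 -[RHS]/(_ * _) mulr1.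
by rewrite !ffunE eq_sym (negbTE yx) -[LHS]/(_ * _) mulr0.
Qed.

Lemma lin_expand (W : lmodType k) (F : V -> W) : lin_map F ->
  forall f, F f = \sum_n f n *: F (free_basis n).
Proof.
move=> linF f; rewrite {1}(free_expand f) lin_sum //.
by apply: eq_bigr => n _; apply: linZ.
Qed.

Lemma lin_free_ext (W : lmodType k) (F G : V -> W) : lin_map F -> lin_map G ->
  (forall n, F (free_basis n) = G (free_basis n)) -> F =1 G.
Proof.
move=> linF linG FG f; rewrite (lin_expand linF) (lin_expand linG).
by apply: eq_bigr => n _; rewrite FG.
Qed.

Lemma free_act_lin m : lin_map (free_act m).
Proof.
move=> a u v; rewrite /free_act scaler_sumr -big_split /=.
by apply: eq_bigr => n _; rewrite !ffunE scalerDl scalerA.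
Qed.

Lemma free_act_basis m n : free_act m (free_basis n) = free_img m n.
Proof.
rewrite /free_act (bigD1 n) //= big1 => [|y yn]; first by rewrite ffunE eqxx scale1r addr0.
by rewrite ffunE (negbTE yn) scale0r.
Qed.

Lemma free_img_in m n (mn : T) : val mn = m ** val n -> free_img m n = free_basis mn.
Proof. by move=> mnE; rewrite /free_img -mnE valK. Qed.

Lemma free_img_out m n : m ** val n \notin A -> free_img m n = 0.
Proof. by move=> mnA; rewrite /free_img insubF // (negbTE mnA). Qed.

Lemma free_actE m f x : free_act m f x = \sum_n f n * (val x == m ** val n)%:R.
Proof.
rewrite /free_act sum_ffunE; apply: eq_bigr => n _; rewrite ffunE /free_img.
case: insubP => [y _ <-|nA]; first by rewrite ffunE -(inj_eq val_inj).
by rewrite ffunE; case: eqP => // xE; rewrite -xE (valP x) in nA.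
Qed.

Lemma free_act1 f : free_act (mone M) f = f.
Proof.
rewrite [RHS]free_expand; apply: eq_bigr => n _.
by rewrite (@free_img_in _ _ n) // mmul1.
Qed.

Hypothesis A_compl_mull : forall m n x, x \in A -> n ** x \notin A -> m ** (n ** x) \notin A.

Lemma free_actM m n f : free_act (m ** n) f = free_act m (free_act n f).
Proof.
apply: (lin_free_ext (free_act_lin _) (lin_comp (free_act_lin m) (free_act_lin n))) => x.
rewrite /= !free_act_basis [free_img n x]/free_img.
case: insubP => [y _ yE|nxA]; first by rewrite free_act_basis /free_img yE mmulA.
by rewrite (lin0 (free_act_lin m)) free_img_out // -mmulA A_compl_mull ?(valP x).
Qed.

Lemma free_act_module : is_kM_module free_act.
Proof. by split; [apply: free_act_lin | apply: free_act1 | apply: free_actM]. Qed.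

End FreeModule.

Arguments free_basis {k M A} n.
Arguments free_img {k M A} m n.
Arguments free_act {k M A} m f.

Section ProjectiveCoverUniqueness.
Variables (k : fieldType) (M : finMonoid).

Lemma image_submodule (V W : lmodType k) (actV : M -> V -> V) (actW : M -> W -> W)
    (f : V -> W) :
  is_kM_hom actV actW f -> is_submodule actW (fun w => exists v, f v = w).
Proof.
case=> linf homf; split.
- by exists 0; rewrite (lin0 linf).
- by move=> _ _ [u <-] [v <-]; exists (u + v); rewrite (linD linf).
- by move=> a _ [v <-]; exists (a *: v); rewrite (linZ linf).
- by move=> m _ [v <-]; exists (actV m v); rewrite homf.
Qed.

Lemma cover_onto (S P V : lmodType k) (actS : M -> S -> S) (actP : M -> P -> P)
    (actV : M -> V -> V) (pi : P -> S) (rho : V -> S) (f : V -> P) :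
  is_projective_cover actS actP pi -> is_kM_hom actV actS rho ->
  is_kM_hom actV actP f -> (forall v, pi (f v) = rho v) ->
  (forall s, exists v, rho v = s) -> forall p, exists v, f v = p.
Proof.
case=> _ [linpi _] _ superfluous _ homf pif rho_onto.
apply: superfluous; first exact: image_submodule homf.
move=> p; have [v vE] := rho_onto (pi p).
exists (f v), (p - f v); split; [by exists v | | by rewrite addrC subrK].
by rewrite (linB linpi) pif vE subrr.
Qed.

Lemma projective_cover_unique (S P Q : lmodType k) (actS : M -> S -> S)
    (actP : M -> P -> P) (actQ : M -> Q -> Q) (pi : P -> S) (rho : Q -> S) :
  is_kM_module actS -> is_projective_cover actS actP pi ->
  is_projective_cover actS actQ rho -> kM_isomorphic actP actQ.
Proof.
move=> modS coverP coverQ.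
have [[modP projP] hompi pi_onto _] := coverP.
have [[modQ projQ] homrho rho_onto _] := coverQ.
have [f [homf rhof]] := projP _ _ _ _ _ modQ modS homrho rho_onto pi hompi.
have f_onto := cover_onto coverQ hompi homf rhof pi_onto.
have homid : is_kM_hom actQ actQ id by [].
have [g [homg fg]] := projQ _ _ _ _ _ modP modQ homf f_onto id homid.
have pig q : pi (g q) = rho q by rewrite -rhof fg.
have g_onto := cover_onto coverP homrho homg pig rho_onto.
exists f; split=> //; exists g => // p.
by have [q <-] := g_onto p; rewrite fg.
Qed.

End ProjectiveCoverUniqueness.

Section Main.
Variables (k : fieldType) (M : finMonoid) (eX : M).
Local Notation "x ** y" := (mmul x y) (at level 40, left associativity).
Hypothesis RT : R_trivial M.
Hypothesis eXi : eX ** eX = eX.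
Local Notation Lt := (Lt_of eX).
Local Notation ML := (ML_of eX).
Local Notation actLt := (@Lt_act k M eX).
Local Notation actML := (@ML_act k M eX).

Lemma Lt_actE : actLt = @free_act k M Lt. Proof. by []. Qed.
Lemma ML_actE : actML = @free_act k M ML. Proof. by []. Qed.

Lemma ML_mulr_eX x : x \in ML -> x ** eX = x.
Proof.
case/imset2P=> a l _; rewrite inE => /eqP lM ->.
have /imsetP[b _ ->] : l \in left_ideal_of eX.
  by rewrite -lM; apply/imsetP; exists (mone M); rewrite ?mmul1.
by rewrite -!mmulA eXi.
Qed.

Lemma ML_mull m x : x \in ML -> m ** x \in ML.
Proof. by case/imset2P=> a l _ lL ->; apply/imset2P; exists (m ** a) l; rewrite ?mmulA. Qed.

Lemma Lt_sub_ML : Lt \subset ML.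
Proof.
apply/subsetP=> x xLt; apply/imset2P; exists x eX; rewrite ?inE //.
by rewrite Lt_mulr_eX.
Qed.

Lemma Lt_act_module : is_kM_module actLt.
Proof.
rewrite Lt_actE; apply: free_act_module => m n x xLt nxLt; apply: contra nxLt.
by apply: (mem_Lt_mull eXi); rewrite -mmulA (Lt_mulr_eX eXi xLt).
Qed.

Lemma ML_act_module : is_kM_module actML.
Proof. by rewrite ML_actE; apply: free_act_module => m n x xML; rewrite ML_mull. Qed.

Definition Lt_to_ML (x : LtT eX) : MLT eX := Sub (val x) (subsetP Lt_sub_ML _ (valP x)).
Definition restrict_Lt (f : kML k eX) : kLt k eX := [ffun x => f (Lt_to_ML x)].

Lemma restrict_Lt_hom : is_kM_hom actML actLt restrict_Lt.
Proof.
split=> [a u v | m f]; first by apply/ffunP=> x; rewrite !ffunE.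
apply/ffunP=> x; rewrite ffunE ML_actE Lt_actE !free_actE.
rewrite (bigID (fun n : MLT eX => val n \in Lt)) /= [X in _ + X]big1 ?addr0.
  rewrite (reindex_onto Lt_to_ML (fun n => insubd x (val n))) /=.
    apply: eq_big => [y | y _]; last by rewrite ffunE.
    by rewrite (valP y); apply/eqP/val_inj; rewrite insubdK // (valP y).
  by move=> n nLt; apply: val_inj; rewrite /= insubdK.
move=> n nLt; case: eqP; rewrite ?mulr0 // => xE.
by move: nLt; rewrite (@mem_Lt_mull _ _ eXi m _ (ML_mulr_eX (valP n))) // -xE (valP x).
Qed.

Lemma restrict_Lt_onto (g : kLt k eX) : exists f, restrict_Lt f = g.
Proof.
exists [ffun n : MLT eX => if insub (val n) is Some y then g y else 0 : k^o].
by apply/ffunP=> x; rewrite !ffunE /= valK.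
Qed.

Lemma restrict_Lt_eq0 (f : kML k eX) : restrict_Lt f = 0 <-> in_kLlt f.
Proof.
split=> [f0 n | f0]; last by apply/ffunP=> x; rewrite !ffunE f0 // inE negb_and (valP x).
rewrite inE (valP n) andbT negbK => nLt.
have /ffunP/(_ (Sub (val n) nLt)) := f0; rewrite !ffunE.
by congr (f _ = _); apply: val_inj.
Qed.

Local Notation X := (two_sided_ideal eX).

Lemma S_actE m (c : k^o) : S_act X m c = if eX ** m == eX then c else 0.
Proof. by rewrite /S_act two_sided_ideal_sub_sigma. Qed.

Lemma S_act_module : is_kM_module (@S_act k M X).
Proof.
split=> [m a u v | v | m n v]; rewrite !S_actE.
- by case: ifP; rewrite ?scaler0 ?addr0.
- by rewrite mmulm1 eqxx.
case: (eqVneq (eX ** m) eX) => [em | nem]; first by rewrite mmulA em.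
by case: eqP => // /(eX_fix_prefix RT eXi) em; rewrite em eqxx in nem.
Qed.

Definition Lt_cover (f : kLt k eX) : k^o := \sum_n f n * (eX ** val n == eX)%:R.

Lemma Lt_cover_lin : lin_map Lt_cover.
Proof.
move=> a u v; rewrite /Lt_cover scaler_sumr -big_split /=.
by apply: eq_bigr => n _; rewrite !ffunE mulrDl -scalerAl.
Qed.

Lemma Lt_cover_basis n : Lt_cover (free_basis n) = (eX ** val n == eX)%:R.
Proof.
rewrite /Lt_cover (bigD1 n) //= big1 => [|y yn]; first by rewrite ffunE eqxx mul1r addr0.
by rewrite ffunE (negbTE yn) mul0r.
Qed.

Lemma Lt_cover_hom : is_kM_hom actLt (@S_act k M X) Lt_cover.
Proof.
split=> [|m]; first exact: Lt_cover_lin.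
have := lin_free_ext (lin_comp Lt_cover_lin (free_act_lin m))
  (lin_comp (kM_module_lin S_act_module m) Lt_cover_lin); apply=> n /=.
have := Lt_mull_fix RT eXi m (valP n).
rewrite free_act_basis Lt_cover_basis S_actE /free_img.
case: insubP => [y yLt yE | nLt]; rewrite ?Lt_cover_basis ?yE.
  by rewrite yLt /= => ->; case: ifP.
rewrite [Lt_cover _](lin0 Lt_cover_lin) (negbTE nLt) /=.
by case: (eX ** m == eX); case: (eX ** val n == eX).
Qed.

Definition Lt_unit : LtT eX := Sub eX (eX_mem_Lt eXi).
Local Notation gen := (free_basis Lt_unit).

Lemma Lt_cover_onto (c : k^o) : exists f, Lt_cover f = c.
Proof.
exists (c *: gen); rewrite (linZ Lt_cover_lin) Lt_cover_basis /= eXi eqxx.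
by rewrite -[_ *: _]/(_ * _) mulr1.
Qed.

Lemma Lt_act_gen (y : LtT eX) : actLt (val y) gen = free_basis y.
Proof.
by rewrite Lt_actE free_act_basis (@free_img_in _ _ _ _ _ y) //= Lt_mulr_eX // (valP y).
Qed.

Lemma Lt_hom_ext (W : lmodType k) (actW : M -> W -> W) (F G : kLt k eX -> W) :
  is_kM_hom actLt actW F -> is_kM_hom actLt actW G ->
  F gen = G gen -> F =1 G.
Proof.
case=> linF homF [linG homG] FG; apply: lin_free_ext linF linG _ => y.
by rewrite -Lt_act_gen homF homG FG.
Qed.

(* Each round of [kill_step]s makes [b] annihilated by strictly-below [z] of
   one more size [#|z M|]; [#|M|] rounds therefore annihilate all of them. *)
Section KillBelow.
Variables (V : lmodType k) (act : M -> V -> V).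

Definition kill_step (b : V) (g : M) := b - act g b.
Definition kill_round (b : V) := foldl kill_step b (strict_idems eX).
Definition kill_below (a : V) := act eX (iter #|M| kill_round a).

Hypothesis modV : is_kM_module act.
Let linV m := kM_module_lin modV m.
Let actM m n v := kM_module_actM modV m n v.

Definition killed_upto j (b : V) :=
  forall z, strictly_below eX z -> (#|right_ideal_of z| <= j)%N -> act z b = 0.

Lemma kill_step_killed j b g : killed_upto j b -> g \in strict_idems eX ->
  killed_upto j (kill_step b g).
Proof.
move=> kb; rewrite mem_strict_idems => /andP[_ gZ] z zZ zj.
rewrite /kill_step (linB (linV z)) -actM !kb ?subrr //.
  exact: strictly_below_mull.
exact: leq_trans (card_right_idealM _ _) zj.
Qed.

Lemma act_kill_step j b g z : killed_upto j b -> g \in strict_idems eX ->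
  strictly_below eX z -> (#|right_ideal_of z| <= j.+1)%N ->
  act z (kill_step b g) = if z ** g == z then 0 else act z b.
Proof.
move=> kb; rewrite mem_strict_idems => /andP[_ gZ] zZ zj.
rewrite /kill_step (linB (linV z)) -actM; case: ifPn => [/eqP -> | zg].
  by rewrite subrr.
rewrite (kb (z ** g)) ?subr0 //; first exact: strictly_below_mull.
by rewrite -ltnS; apply: leq_trans (card_right_idealM_lt RT zg) zj.
Qed.

Lemma act_kill_fold j b z (s : seq M) : killed_upto j b -> {subset s <= strict_idems eX} ->
  strictly_below eX z -> (#|right_ideal_of z| <= j.+1)%N ->
  (act z b = 0 \/ exists2 g, g \in s & z ** g = z) -> act z (foldl kill_step b s) = 0.
Proof.
elim: s b => [|g s IH] b kb sZ zZ zj /= zb; first by case: zb => // -[].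
have gZ : g \in strict_idems eX by apply: sZ; rewrite inE eqxx.
apply: IH => [||//|//|]; first exact: kill_step_killed.
  by move=> x xs; apply: sZ; rewrite inE xs orbT.
rewrite (act_kill_step kb gZ zZ zj); case: eqP => [_|zg]; first by left.
case: zb => [|[g']]; first by left.
by rewrite inE => /orP[/eqP -> /zg | g's zg']; [|right; exists g'].
Qed.

Lemma kill_round_killed j b : killed_upto j b -> killed_upto j.+1 (kill_round b).
Proof.
move=> kb z zZ zj; apply: (act_kill_fold kb _ zZ zj) => //.
by have [g gZ zg] := strictly_below_right_unit RT eXi zZ; right; exists g.
Qed.

Lemma kill_below_killed z a : strictly_below eX z -> act z (kill_below a) = 0.
Proof.
move=> zZ; rewrite /kill_below -actM; case/andP: (zZ) => /eqP -> _.
have kn n : killed_upto n (iter n kill_round a).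
  elim: n => [|n IH] /=; last exact: kill_round_killed.
  by move=> x _; rewrite leqNgt card_right_ideal_gt0.
exact/kn/max_card.
Qed.

End KillBelow.

Lemma kill_below_hom (V W : lmodType k) (actV : M -> V -> V) (actW : M -> W -> W)
    (f : V -> W) :
  is_kM_hom actV actW f -> forall a, f (kill_below actV a) = kill_below actW (f a).
Proof.
case=> linf homf a; rewrite /kill_below homf; congr (actW eX _).
elim: #|M| => [|n IH] //=; rewrite -IH /kill_round.
elim: (strict_idems eX) (iter n _ a) => [|g s IHs] b //=.
by rewrite IHs /kill_step (linB linf) homf.
Qed.

Lemma kill_below_gen : kill_below actLt gen = gen.
Proof.
have step g : g \in strict_idems eX -> kill_step actLt gen g = gen.
  rewrite mem_strict_idems => /andP[_ /andP[/eqP ge gLt]].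
  by rewrite /kill_step Lt_actE free_act_basis free_img_out ?subr0 //= ge.
have fold s : {subset s <= strict_idems eX} -> foldl (kill_step actLt) gen s = gen.
  elim: s => //= g s IH sZ; rewrite step ?IH // => [x xs|]; apply: sZ.
    by rewrite inE xs orbT.
  by rewrite inE eqxx.
rewrite /kill_below; have -> : iter #|M| (kill_round actLt) gen = gen.
  by elim: #|M| => //= n ->; apply: fold.
exact: (Lt_act_gen Lt_unit).
Qed.

Section LiftFromGen.
Variables (A : lmodType k) (actA : M -> A -> A) (b : A).
Hypothesis modA : is_kM_module actA.
Hypothesis b_killed : forall z, strictly_below eX z -> actA z b = 0.

Definition Lt_lift (f : kLt k eX) : A := \sum_n f n *: actA (val n) b.

Lemma Lt_lift_lin : lin_map Lt_lift.
Proof.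
move=> c u v; rewrite /Lt_lift scaler_sumr -big_split /=.
by apply: eq_bigr => n _; rewrite !ffunE scalerDl scalerA.
Qed.

Lemma Lt_lift_basis y : Lt_lift (free_basis y) = actA (val y) b.
Proof.
rewrite /Lt_lift (bigD1 y) //= big1 => [|x xy]; first by rewrite ffunE eqxx scale1r addr0.
by rewrite ffunE (negbTE xy) scale0r.
Qed.

Lemma Lt_lift_hom : is_kM_hom actLt actA Lt_lift.
Proof.
split=> [|m]; first exact: Lt_lift_lin.
apply: (lin_free_ext (lin_comp Lt_lift_lin (free_act_lin m))
  (lin_comp (kM_module_lin modA m) Lt_lift_lin)) => y /=.
rewrite free_act_basis Lt_lift_basis -(kM_module_actM modA) /free_img.
case: insubP => [z _ zE | yLt]; first by rewrite Lt_lift_basis zE.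
rewrite (lin0 Lt_lift_lin) b_killed // /strictly_below yLt andbT.
by rewrite -mmulA (Lt_mulr_eX _ (valP y)).
Qed.

End LiftFromGen.

Lemma Lt_act_projective : is_projective actLt.
Proof.
split=> [|A B actA actB g modA modB homg g_onto h homh]; first exact: Lt_act_module.
have [a ga] := g_onto (h gen).
pose b := kill_below actA a.
have homl : is_kM_hom actLt actA (Lt_lift actA b).
  by apply: Lt_lift_hom => // z; apply: kill_below_killed.
exists (Lt_lift actA b); split=> //.
apply: (@Lt_hom_ext _ actB (g \o Lt_lift actA b) h) => //.
  exact: kM_hom_comp homg homl.
have gb : g b = h gen.
  by rewrite (kill_below_hom homg) ga -(kill_below_hom homh) kill_below_gen.
rewrite /= (Lt_lift_basis _ _ Lt_unit) (proj2 homg) gb -(proj2 homh).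
exact: congr1 (Lt_act_gen Lt_unit).
Qed.

Section SuperfluousKernel.
Variable N : kLt k eX -> Prop.
Hypothesis subN : is_submodule actLt N.
Hypothesis N_ker_span : forall v, exists a b, [/\ N a, Lt_cover b = 0 & v = a + b].

Lemma sub_lincomb (P : pred (LtT eX)) (c : LtT eX -> k^o) (F : LtT eX -> kLt k eX) :
  (forall x, P x -> c x != 0 -> N (F x)) -> N (\sum_(x | P x) c x *: F x).
Proof.
have [N0 ND NZ _] := subN; move=> NF; apply: big_ind => // x Px.
by case: (eqVneq (c x) 0) => [->|cx]; [rewrite scale0r | apply/NZ/NF].
Qed.

Lemma subB u v : N u -> N v -> N (u - v).
Proof.
have [_ ND NZ _] := subN; move=> Nu Nv.
by apply: ND => //; rewrite -scaleN1r; apply: NZ.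
Qed.

(* [eX] applied to an element of [N] lying over [1] in [S_X]. *)
Lemma sub_cover_unit : exists2 u, N u &
  u Lt_unit = 1 /\ forall y, u y != 0 -> eX ** val y = val y.
Proof.
have [_ _ _ NA] := subN; have [a [b [Na b0 genE]]] := N_ker_span gen.
have a1 : Lt_cover a = 1.
  move/(congr1 Lt_cover): genE; rewrite (linD Lt_cover_lin) b0 addr0.
  by rewrite Lt_cover_basis /= eXi eqxx => <-.
exists (actLt eX a); first exact: NA.
have uE y : actLt eX a y = \sum_n a n * (val y == eX ** val n)%:R.
  by rewrite Lt_actE free_actE.
split=> [|y]; first by rewrite uE -[RHS]a1; apply: eq_bigr => n _; rewrite eq_sym.
rewrite uE; apply: contraNeq => yE; apply/eqP/big1 => n _.
case: eqP => [yn|_]; last by rewrite mulr0.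
by rewrite yn mmulA eXi eqxx in yE.
Qed.

Section FromUnit.
Variable u : kLt k eX.
Hypotheses (Nu : N u) (u1 : u Lt_unit = 1).
Hypothesis u_fixed : forall y, u y != 0 -> eX ** val y = val y.

(* Induction on [#|y M|]: [y u] is [y] plus terms [y x] with [eX x = x != eX],
   and these have smaller right ideals by [Lt_mulr_neq]. *)
Lemma sub_basis_fixed j (y : LtT eX) : eX ** val y = val y -> val y != eX ->
  (#|right_ideal_of (val y)| <= j)%N -> N (free_basis y).
Proof.
have [_ _ _ NA] := subN.
elim: j y => [|j IH] y ey yneX yj; first by rewrite leqNgt card_right_ideal_gt0 in yj.
have yuE : actLt (val y) u =
    free_basis y + \sum_(x | x != Lt_unit) u x *: free_img (val y) x.
  rewrite Lt_actE /free_act (bigD1 Lt_unit) //= u1 scale1r.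
  by rewrite (@free_img_in _ _ _ _ _ y) //= Lt_mulr_eX ?(valP y).
have -> : free_basis y = actLt (val y) u - \sum_(x | x != Lt_unit) u x *: free_img (val y) x.
  by rewrite yuE addrK.
apply: subB; first exact: NA.
apply: sub_lincomb => x xneq /u_fixed ex.
have xneX : val x != eX by apply: contraNneq xneq => xE; apply/eqP/val_inj.
have lt_yx := card_right_idealM_lt RT (Lt_mulr_neq RT eXi (valP y) ex xneX).
rewrite /free_img; case: insubP => [z _ zE|_]; last by case: subN.
apply: IH; first by rewrite zE mmulA ey.
  apply: contraTneq lt_yx; rewrite -zE => ->.
  by rewrite -leqNgt -{1}ey card_right_idealM.
by rewrite zE -ltnS (leq_trans lt_yx).
Qed.

Lemma sub_gen : N gen.
Proof.
have -> : gen = u - \sum_(x | x != Lt_unit) u x *: free_basis x.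
  by rewrite {1}(free_expand u) (bigD1 Lt_unit) //= u1 scale1r addrK.
apply: subB => //; apply: sub_lincomb => x xneq ux.
apply: (@sub_basis_fixed #|M|); [exact: u_fixed | | exact: max_card].
by apply: contraNneq xneq => xE; apply/eqP/val_inj.
Qed.

End FromUnit.

Lemma sub_all v : N v.
Proof.
have [u Nu [u1 u_fixed]] := sub_cover_unit.
have [_ _ _ NA] := subN; rewrite (free_expand v).
apply: sub_lincomb => y _ _; rewrite -Lt_act_gen.
exact/NA/(sub_gen Nu u1 u_fixed).
Qed.

End SuperfluousKernel.

Lemma Lt_projective_cover : is_projective_cover (@S_act k M X) actLt Lt_cover.
Proof.
split; [exact: Lt_act_projective | exact: Lt_cover_hom | exact: Lt_cover_onto | ].
exact: sub_all.
Qed.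

End Main.

Unset Implicit Arguments.

Theorem mainTheorem10 (M : finMonoid) (k : fieldType) (X : {set M}) (eX : M) :
  R_trivial M ->
  idempotent_el eX -> two_sided_ideal eX = X ->
  [/\ is_kM_module (@Lt_act k M eX),
      (exists pi : kLt k eX -> k^o,
         is_projective_cover (@S_act k M X) (@Lt_act k M eX) pi),
      (forall (P : lmodType k) (actP : M -> P -> P) (pi : P -> k^o),
         is_projective_cover (@S_act k M X) actP pi ->
         kM_isomorphic actP (@Lt_act k M eX)) &
  (* k L~_X is isomorphic to kML_X / k L~(X)_< *)
      is_kM_module (@ML_act k M eX) /\
      exists phi : kML k eX -> kLt k eX,
        [/\ is_kM_hom (@ML_act k M eX) (@Lt_act k M eX) phi,
            (forall g, exists f, phi f = g) &
            forall f, phi f = 0 <-> in_kLlt f]].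
Proof.
move=> RT /eqP eXi <-.
have cover := Lt_projective_cover k RT eXi.
split.
- exact: Lt_act_module.
- by eexists; exact: cover.
- move=> P actP pi coverP.
  exact: projective_cover_unique (S_act_module k RT eXi) coverP cover.
- split; first exact: ML_act_module.
  eexists; split.
  + exact: restrict_Lt_hom.
  + exact: restrict_Lt_onto.
  + exact: restrict_Lt_eq0.
Qed.
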